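(* Let $I\subseteq\mathbb{R}$ be an interval, $\phi:I\times\mathbb{R}^2\to\mathbb{C}$ a smooth function and $\widetilde{A}=\widetilde{A}_tdt+\widetilde{A}_1dx^1+\widetilde{A}_2dx^2$ a smooth real-valued $1$-form on $I\times\mathbb{R}^2$, with covariant derivatives $\widetilde{\mathbf{D}}_\alpha=\partial_\alpha+i\widetilde{A}_\alpha$ and curvature $\widetilde F=d\widetilde A$. Suppose $$\widetilde F_{t\bar z}=\bar\phi\,\widetilde{\mathbf{D}}_{\bar z}\phi,\qquad \widetilde F_{z\bar z}=\tfrac{1}{4i}|\phi|^2,\qquad i\widetilde{\mathbf{D}}_t\phi+4\widetilde{\mathbf{D}}_z\widetilde{\mathbf{D}}_{\bar z}\phi=0.$$ Then $$i\widetilde{\mathbf{D}}_t\widetilde{\mathbf{D}}_{\bar z}\phi+4\widetilde{\mathbf{D}}_z\widetilde{\mathbf{D}}_{\bar z}\widetilde{\mathbf{D}}_{\bar z}\phi=0,$$ $$i\widetilde{\mathbf{D}}_t\widetilde{\mathbf{D}}_{\bar z}\widetilde{\mathbf{D}}_{\bar z}\phi+4\widetilde{\mathbf{D}}_{\bar z}\widetilde{\mathbf{D}}_z\widetilde{\mathbf{D}}_{\bar z}\widetilde{\mathbf{D}}_{\bar z}\phi+\bar\phi\,(\widetilde{\mathbf{D}}_{\bar z}\phi)^2=0.$$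
   Context: Wirtinger derivatives: $\partial_z=\frac12\partial_1+\frac1{2i}\partial_2$, $\partial_{\bar z}=\frac12\partial_1-\frac1{2i}\partial_2$; correspondingly $\widetilde A_z=\frac12\widetilde A_1+\frac1{2i}\widetilde A_2$, $\widetilde A_{\bar z}=\frac12\widetilde A_1-\frac1{2i}\widetilde A_2$, $\widetilde{\mathbf{D}}_z=\partial_z+i\widetilde A_z$, $\widetilde{\mathbf{D}}_{\bar z}=\partial_{\bar z}+i\widetilde A_{\bar z}$. Curvature components: $\widetilde F_{t\bar z}=\widetilde F(\partial_t,\partial_{\bar z})=\frac12\widetilde F_{t1}-\frac1{2i}\widetilde F_{t2}$ and $\widetilde F_{z\bar z}=\widetilde F(\partial_z,\partial_{\bar z})=-\frac1{2i}\widetilde F_{12}$, where $\widetilde F_{\alpha\beta}=\partial_\alpha\widetilde A_\beta-\partial_\beta\widetilde A_\alpha$. *)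

From Stdlib Require Import Reals ClassicalEpsilon List.
From Coquelicot Require Import Complex.
Open Scope R_scope.

Definition is_interval (I : R -> Prop) : Prop :=
  (forall a b c, I a -> I c -> a <= b <= c -> I b) /\
  (exists a b, a < b /\ I a /\ I b).

(* l is the derivative at t of f restricted to D (one-sided at endpoints of an interval). *)
Definition has_deriv_within (D : R -> Prop) (f : R -> R) (t l : R) : Prop :=
  forall eps, 0 < eps -> exists delta, 0 < delta /\
    forall s, D s -> 0 < Rabs (s - t) < delta ->
      Rabs ((f s - f t) / (s - t) - l) < eps.

Definition deriv_within (D : R -> Prop) (f : R -> R) (t : R) : R :=
  match excluded_middle_informative (exists l, has_deriv_within D f t l) with
  | left H => proj1_sig (constructive_indefinite_description _ H)
  | right _ => 0
  end.

Inductive dir := Dt | D1 | D2.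

Definition fullR : R -> Prop := fun _ => True.

Definition dom_of (I : R -> Prop) (d : dir) : R -> Prop :=
  match d with Dt => I | _ => fullR end.

Definition section (d : dir) (f : R -> R -> R -> R) (t x y : R) : R -> R :=
  match d with
  | Dt => fun s => f s x y
  | D1 => fun s => f t s y
  | D2 => fun s => f t x s
  end.

Definition coord (d : dir) (t x y : R) : R :=
  match d with Dt => t | D1 => x | D2 => y end.

Definition partial (I : R -> Prop) (d : dir) (f : R -> R -> R -> R) : R -> R -> R -> R :=
  fun t x y => deriv_within (dom_of I d) (section d f t x y) (coord d t x y).

Definition iter_partial (I : R -> Prop) (w : list dir) (f : R -> R -> R -> R)
  : R -> R -> R -> R := fold_right (partial I) f w.

Definition continuous_on_dom (I : R -> Prop) (g : R -> R -> R -> R) : Prop :=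
  forall t x y, I t -> forall eps, 0 < eps -> exists delta, 0 < delta /\
    forall t' x' y', I t' -> Rabs (t' - t) < delta -> Rabs (x' - x) < delta ->
      Rabs (y' - y) < delta -> Rabs (g t' x' y' - g t x y) < eps.

Definition smooth_on (I : R -> Prop) (f : R -> R -> R -> R) : Prop :=
  forall w : list dir,
    continuous_on_dom I (iter_partial I w f) /\
    forall d t x y, I t ->
      exists l, has_deriv_within (dom_of I d) (section d (iter_partial I w f) t x y)
                  (coord d t x y) l.

Definition smoothC_on (I : R -> Prop) (g : R -> R -> R -> C) : Prop :=
  smooth_on I (fun t x y => fst (g t x y)) /\ smooth_on I (fun t x y => snd (g t x y)).

Definition cpartial (I : R -> Prop) (d : dir) (g : R -> R -> R -> C) : R -> R -> R -> C :=
  fun t x y => (partial I d (fun t x y => fst (g t x y)) t x y,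
                partial I d (fun t x y => snd (g t x y)) t x y).

Open Scope C_scope.

Definition Acomp (At A1 A2 : R -> R -> R -> R) (d : dir) : R -> R -> R -> R :=
  match d with Dt => At | D1 => A1 | D2 => A2 end.

Definition covD (I : R -> Prop) (At A1 A2 : R -> R -> R -> R) (d : dir)
  (psi : R -> R -> R -> C) : R -> R -> R -> C :=
  fun t x y => cpartial I d psi t x y + Ci * RtoC (Acomp At A1 A2 d t x y) * psi t x y.

Definition covDz (I : R -> Prop) (At A1 A2 : R -> R -> R -> R)
  (psi : R -> R -> R -> C) : R -> R -> R -> C :=
  fun t x y => / RtoC 2 * covD I At A1 A2 D1 psi t x y
             + / (RtoC 2 * Ci) * covD I At A1 A2 D2 psi t x y.

Definition covDzb (I : R -> Prop) (At A1 A2 : R -> R -> R -> R)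
  (psi : R -> R -> R -> C) : R -> R -> R -> C :=
  fun t x y => / RtoC 2 * covD I At A1 A2 D1 psi t x y
             - / (RtoC 2 * Ci) * covD I At A1 A2 D2 psi t x y.

Definition curv (I : R -> Prop) (At A1 A2 : R -> R -> R -> R) (a b : dir)
  : R -> R -> R -> R :=
  fun t x y => (partial I a (Acomp At A1 A2 b) t x y - partial I b (Acomp At A1 A2 a) t x y)%R.

Definition F_tzb (I : R -> Prop) (At A1 A2 : R -> R -> R -> R) : R -> R -> R -> C :=
  fun t x y => / RtoC 2 * RtoC (curv I At A1 A2 Dt D1 t x y)
             - / (RtoC 2 * Ci) * RtoC (curv I At A1 A2 Dt D2 t x y).

Definition F_zzb (I : R -> Prop) (At A1 A2 : R -> R -> R -> R) : R -> R -> R -> C :=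
  fun t x y => - (/ (RtoC 2 * Ci) * RtoC (curv I At A1 A2 D1 D2 t x y)).

(* Applying D_zbar to the Schroedinger equation and commuting it past D_t and D_z produces
   curvature terms, because D_a (D_b p) = D_b (D_a p) + i F_ab p.  Under the two curvature
   constraints these terms are F_{t zbar} phi = |phi|^2 D_zbar phi and
   -4i F_{z zbar} D_zbar phi = -|phi|^2 D_zbar phi, which cancel: this gives the first
   identity.  Applying D_zbar to the first identity and commuting it only past D_t leaves the
   single term F_{t zbar} D_zbar phi = conj(phi) (D_zbar phi)^2, which gives the second.

   The commutator formula rests on the symmetry of second partial derivatives.  Coquelicot's
   Schwarz theorem needs two-sided derivatives, so it applies only at interior times; continuity
   extends the symmetry to the endpoints of I. *)

From Stdlib Require Import Reals Lra List ClassicalEpsilon.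
From Coquelicot Require Import Complex Coquelicot.

Open Scope R_scope.

Definition punctured (D : R -> Prop) (c : R) (s : R) : Prop := D s /\ s <> c.

Lemma limit1_in_ext (f g : R -> R) (D : R -> Prop) (l c : R) :
  (forall s, D s -> f s = g s) -> limit1_in f D l c -> limit1_in g D l c.
Proof.
  intros Hfg Hf eps Heps.
  destruct (Hf eps Heps) as [delta [Hdelta Hclose]].
  exists delta; split; [exact Hdelta |].
  intros s [Ds Hs]; rewrite <- Hfg by exact Ds; exact (Hclose s (conj Ds Hs)).
Qed.

Section DerivWithin.

Variables (D : R -> Prop) (c : R).

Lemma has_deriv_within_limit (f : R -> R) (l : R) :
  has_deriv_within D f c l <->
  limit1_in (fun s => (f s - f c) / (s - c)) (punctured D c) l c.
Proof.
  unfold has_deriv_within, limit1_in, limit_in, punctured; simpl; unfold Rdist.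
  split; intros H eps Heps; destruct (H eps Heps) as [delta [Hdelta Hclose]];
    exists delta; split; auto.
  - intros s [[Ds Hsc] Hs]; apply Hclose; auto; split; [|exact Hs].
    apply Rabs_pos_lt; lra.
  - intros s Ds [Hpos Hs]; apply Hclose; split; [split; auto | exact Hs].
    intros ->; rewrite Rminus_diag, Rabs_R0 in Hpos; lra.
Qed.

Lemma limit1_in_const (P : R -> Prop) (k : R) : limit1_in (fun _ => k) P k c.
Proof. exact (limit_free (fun _ => k) P 0 c). Qed.

Lemma has_deriv_within_quotient (f : R -> R) (q : R -> R) (l : R) :
  (forall s, s <> c -> (f s - f c) / (s - c) = q s) ->
  limit1_in q (punctured D c) l c -> has_deriv_within D f c l.
Proof.
  intros Hq Hlim; apply has_deriv_within_limit.
  apply (limit1_in_ext q); [| exact Hlim].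
  intros s [_ Hs]; symmetry; exact (Hq s Hs).
Qed.

Lemma has_deriv_within_continuous (f : R -> R) (l : R) :
  has_deriv_within D f c l -> limit1_in f (punctured D c) (f c) c.
Proof.
  intros Hf%has_deriv_within_limit.
  assert (Hlim := limit_plus _ _ _ _ _ _ (limit1_in_const _ (f c))
            (limit_mul _ _ _ _ _ _ Hf
               (limit_minus _ _ _ _ _ _ (lim_x (punctured D c) c) (limit1_in_const _ c)))).
  rewrite Rminus_diag, Rmult_0_r, Rplus_0_r in Hlim.
  apply (limit1_in_ext _ f _ _ _ ) in Hlim; [exact Hlim |].
  intros s [_ Hs]; field; lra.
Qed.

Lemma has_deriv_within_const (k : R) : has_deriv_within D (fun _ => k) c 0.
Proof.
  apply (has_deriv_within_quotient _ (fun _ => 0)); [| apply limit1_in_const].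
  intros s Hs; field; lra.
Qed.

Lemma has_deriv_within_plus (f g : R -> R) (lf lg : R) :
  has_deriv_within D f c lf -> has_deriv_within D g c lg ->
  has_deriv_within D (fun s => f s + g s) c (lf + lg).
Proof.
  intros Hf%has_deriv_within_limit Hg%has_deriv_within_limit.
  eapply has_deriv_within_quotient; [| exact (limit_plus _ _ _ _ _ _ Hf Hg)].
  intros s Hs; simpl; field; lra.
Qed.

Lemma has_deriv_within_minus (f g : R -> R) (lf lg : R) :
  has_deriv_within D f c lf -> has_deriv_within D g c lg ->
  has_deriv_within D (fun s => f s - g s) c (lf - lg).
Proof.
  intros Hf%has_deriv_within_limit Hg%has_deriv_within_limit.
  eapply has_deriv_within_quotient; [| exact (limit_minus _ _ _ _ _ _ Hf Hg)].
  intros s Hs; simpl; field; lra.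
Qed.

Lemma has_deriv_within_mult (f g : R -> R) (lf lg : R) :
  has_deriv_within D f c lf -> has_deriv_within D g c lg ->
  has_deriv_within D (fun s => f s * g s) c (lf * g c + f c * lg).
Proof.
  intros Hf Hg.
  assert (Hgc := has_deriv_within_continuous g lg Hg).
  apply has_deriv_within_limit in Hf, Hg.
  eapply has_deriv_within_quotient;
    [| exact (limit_plus _ _ _ _ _ _ (limit_mul _ _ _ _ _ _ Hf Hgc)
                (limit_mul _ _ _ _ _ _ (limit1_in_const _ (f c)) Hg))].
  intros s Hs; simpl; field; lra.
Qed.

Lemma has_deriv_within_ext (f g : R -> R) (l : R) :
  D c -> (forall s, D s -> f s = g s) ->
  has_deriv_within D f c l -> has_deriv_within D g c l.
Proof.
  intros Dc Hfg Hf%has_deriv_within_limit; apply has_deriv_within_limit.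
  apply (limit1_in_ext _ (fun s => (g s - g c) / (s - c))) in Hf; [exact Hf |].
  intros s [Ds _]; rewrite !Hfg; auto.
Qed.

Lemma deriv_within_eq (f : R -> R) (l : R) :
  adhDa (punctured D c) c -> has_deriv_within D f c l -> deriv_within D f c = l.
Proof.
  intros Hadh Hl; unfold deriv_within.
  destruct (excluded_middle_informative _) as [Hex | Hnex].
  - destruct (constructive_indefinite_description _ Hex) as [l' Hl']; simpl.
    apply has_deriv_within_limit in Hl, Hl'.
    exact (single_limit _ _ _ _ _ Hadh Hl' Hl).
  - exfalso; apply Hnex; exists l; exact Hl.
Qed.

Lemma is_derive_of_interior (f : R -> R) (l : R) :
  interior D c -> has_deriv_within D f c l -> is_derive f c l.
Proof.
  intros [r Hr] Hf; apply is_derive_Reals; intros eps Heps.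
  destruct (Hf eps Heps) as [delta [Hdelta Hclose]].
  exists (mkposreal _ (Rmin_pos _ _ Hdelta (cond_pos r))); simpl; intros h Hh0 Hh.
  assert (Hdisc : D (c + h)).
  { apply Hr; unfold disc; replace (c + h - c) with h by ring.
    pose proof (Rmin_r delta r); lra. }
  specialize (Hclose (c + h) Hdisc); replace (c + h - c) with h in Hclose by ring.
  apply Hclose; split; [apply Rabs_pos_lt; exact Hh0 |].
  pose proof (Rmin_l delta r); lra.
Qed.

End DerivWithin.

Lemma interval_interior_approx (I : R -> Prop) (c delta : R) :
  is_interval I -> I c -> 0 < delta ->
  exists s, interior I s /\ 0 < Rabs (s - c) < delta.
Proof.
  intros [Hconv [a [b [Hab [Ia Ib]]]]] Ic Hdelta.
  destruct (Rlt_le_dec c b) as [Hcb | Hbc].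
  - assert (Hh : 0 < Rmin delta (b - c) / 2) by (apply Rdiv_lt_0_compat; [apply Rmin_pos |]; lra).
    pose proof (Rmin_l delta (b - c)); pose proof (Rmin_r delta (b - c)).
    exists (c + Rmin delta (b - c) / 2); split.
    + exists (mkposreal _ Hh); intros z Hz; unfold disc in Hz; simpl in Hz.
      apply Rabs_def2 in Hz; apply (Hconv c z b); auto; lra.
    + replace (c + Rmin delta (b - c) / 2 - c) with (Rmin delta (b - c) / 2) by ring.
      rewrite Rabs_pos_eq; lra.
  - assert (Hh : 0 < Rmin delta (c - a) / 2) by (apply Rdiv_lt_0_compat; [apply Rmin_pos |]; lra).
    pose proof (Rmin_l delta (c - a)); pose proof (Rmin_r delta (c - a)).
    exists (c - Rmin delta (c - a) / 2); split.
    + exists (mkposreal _ Hh); intros z Hz; unfold disc in Hz; simpl in Hz.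
      apply Rabs_def2 in Hz; apply (Hconv a z c); auto; lra.
    + replace (c - Rmin delta (c - a) / 2 - c) with (- (Rmin delta (c - a) / 2)) by ring.
      rewrite Rabs_Ropp, Rabs_pos_eq; lra.
Qed.

Lemma interval_adherent (I : R -> Prop) (c : R) :
  is_interval I -> I c -> adhDa (punctured I c) c.
Proof.
  intros HI Ic delta Hdelta.
  destruct (interval_interior_approx I c delta HI Ic Hdelta) as [s [Hs [Hpos Hclose]]].
  exists s; split; [split; [exact (interior_P1 I s Hs) |] | exact Hclose].
  intros ->; rewrite Rminus_diag, Rabs_R0 in Hpos; lra.
Qed.

Lemma fullR_adherent (c : R) : adhDa (punctured fullR c) c.
Proof.
  intros delta Hdelta; exists (c + delta / 2); split; [split; [exact Logic.I | lra] |].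
  unfold Rdist; replace (c + delta / 2 - c) with (delta / 2) by ring.
  rewrite Rabs_pos_eq; lra.
Qed.

Definition eq_on {T : Type} (I : R -> Prop) (f g : R -> R -> R -> T) : Prop :=
  forall t x y, I t -> f t x y = g t x y.

Definition differentiable_on (I : R -> Prop) (d : dir) (f : R -> R -> R -> R) : Prop :=
  forall t x y, I t ->
    exists l, has_deriv_within (dom_of I d) (section d f t x y) (coord d t x y) l.

Lemma section_map2 (h : R -> R -> R) (d : dir) (f g : R -> R -> R -> R) (t x y : R) :
  section d (fun t x y => h (f t x y) (g t x y)) t x y =
  fun s => h (section d f t x y s) (section d g t x y s).
Proof. destruct d; reflexivity. Qed.

Lemma section_const (d : dir) (k t x y : R) : section d (fun _ _ _ => k) t x y = fun _ => k.
Proof. destruct d; reflexivity. Qed.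

Lemma section_coord (d : dir) (f : R -> R -> R -> R) (t x y : R) :
  section d f t x y (coord d t x y) = f t x y.
Proof. destruct d; reflexivity. Qed.

Lemma Rmult_close (a0 b0 eps : R) : 0 < eps -> exists delta, 0 < delta /\
  forall a b, Rabs (a - a0) < delta -> Rabs (b - b0) < delta -> Rabs (a * b - a0 * b0) < eps.
Proof.
  intros Heps.
  pose proof (Rabs_pos a0); pose proof (Rabs_pos b0).
  assert (HM : 0 < Rabs a0 + Rabs b0 + 1) by lra.
  exists (Rmin 1 (eps / (Rabs a0 + Rabs b0 + 1))); split.
  { apply Rmin_pos; [lra | apply Rdiv_lt_0_compat; lra]. }
  intros a b Ha Hb.
  pose proof (Rmin_l 1 (eps / (Rabs a0 + Rabs b0 + 1))) as Hle1.
  pose proof (Rmin_r 1 (eps / (Rabs a0 + Rabs b0 + 1))) as Hle2.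
  set (delta := Rmin 1 (eps / (Rabs a0 + Rabs b0 + 1))) in *.
  assert (HdM : delta * (Rabs a0 + Rabs b0 + 1) <= eps).
  { apply Rmult_le_compat_r with (r := Rabs a0 + Rabs b0 + 1) in Hle2; [| lra].
    unfold Rdiv in Hle2; rewrite Rmult_assoc, Rinv_l in Hle2; lra. }
  replace (a * b - a0 * b0) with ((a - a0) * (b - b0) + a0 * (b - b0) + b0 * (a - a0)) by ring.
  pose proof (Rabs_triang ((a - a0) * (b - b0) + a0 * (b - b0)) (b0 * (a - a0))).
  pose proof (Rabs_triang ((a - a0) * (b - b0)) (a0 * (b - b0))).
  rewrite !Rabs_mult in *.
  pose proof (Rabs_pos (a - a0)); pose proof (Rabs_pos (b - b0)).
  nra.
Qed.

Lemma continuous_on_dom_ext (I : R -> Prop) (f g : R -> R -> R -> R) :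
  eq_on I f g -> continuous_on_dom I f -> continuous_on_dom I g.
Proof.
  intros Hfg Hf t x y It eps Heps; destruct (Hf t x y It eps Heps) as [delta [Hdelta Hclose]].
  exists delta; split; [exact Hdelta |]; intros; rewrite <- !Hfg; auto.
Qed.

Lemma continuous_on_dom_const (I : R -> Prop) (k : R) : continuous_on_dom I (fun _ _ _ => k).
Proof.
  intros t x y _ eps Heps; exists 1; split; [lra |].
  intros; rewrite Rminus_diag, Rabs_R0; exact Heps.
Qed.

Lemma continuous_on_dom_plus (I : R -> Prop) (f g : R -> R -> R -> R) :
  continuous_on_dom I f -> continuous_on_dom I g ->
  continuous_on_dom I (fun t x y => f t x y + g t x y).
Proof.
  intros Hf Hg t x y It eps Heps.
  destruct (Hf t x y It (eps / 2)) as [d1 [Hd1 Hclose1]]; [lra |].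
  destruct (Hg t x y It (eps / 2)) as [d2 [Hd2 Hclose2]]; [lra |].
  exists (Rmin d1 d2); split; [apply Rmin_pos; auto |].
  intros t' x' y' It' Ht Hx Hy.
  pose proof (Rmin_l d1 d2); pose proof (Rmin_r d1 d2).
  specialize (Hclose1 t' x' y' It' ltac:(lra) ltac:(lra) ltac:(lra)).
  specialize (Hclose2 t' x' y' It' ltac:(lra) ltac:(lra) ltac:(lra)).
  replace (f t' x' y' + g t' x' y' - (f t x y + g t x y))
    with ((f t' x' y' - f t x y) + (g t' x' y' - g t x y)) by ring.
  pose proof (Rabs_triang (f t' x' y' - f t x y) (g t' x' y' - g t x y)); lra.
Qed.

Lemma continuous_on_dom_mult (I : R -> Prop) (f g : R -> R -> R -> R) :
  continuous_on_dom I f -> continuous_on_dom I g ->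
  continuous_on_dom I (fun t x y => f t x y * g t x y).
Proof.
  intros Hf Hg t x y It eps Heps.
  destruct (Rmult_close (f t x y) (g t x y) eps Heps) as [delta [Hdelta Hclose]].
  destruct (Hf t x y It delta Hdelta) as [d1 [Hd1 Hclose1]].
  destruct (Hg t x y It delta Hdelta) as [d2 [Hd2 Hclose2]].
  exists (Rmin d1 d2); split; [apply Rmin_pos; auto |].
  intros t' x' y' It' Ht Hx Hy.
  pose proof (Rmin_l d1 d2); pose proof (Rmin_r d1 d2).
  apply Hclose; [apply Hclose1 | apply Hclose2]; auto; lra.
Qed.

Section Partials.

Variable I : R -> Prop.
Hypothesis HI : is_interval I.

Lemma dom_of_coord (d : dir) (t x y : R) : I t -> dom_of I d (coord d t x y).
Proof. destruct d; simpl; auto; constructor. Qed.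

Lemma section_eq_on (d : dir) (f g : R -> R -> R -> R) (t x y : R) :
  eq_on I f g -> I t ->
  forall s, dom_of I d s -> section d f t x y s = section d g t x y s.
Proof. intros Hfg It; destruct d; simpl; intros; apply Hfg; auto. Qed.

Lemma partial_eq (d : dir) (f : R -> R -> R -> R) (t x y l : R) : I t ->
  has_deriv_within (dom_of I d) (section d f t x y) (coord d t x y) l ->
  partial I d f t x y = l.
Proof.
  intros It; apply deriv_within_eq.
  destruct d; [apply interval_adherent; auto | apply fullR_adherent | apply fullR_adherent].
Qed.

Lemma has_partial (d : dir) (f : R -> R -> R -> R) (t x y : R) :
  differentiable_on I d f -> I t ->
  has_deriv_within (dom_of I d) (section d f t x y) (coord d t x y) (partial I d f t x y).
Proof.
  intros Hf It; destruct (Hf t x y It) as [l Hl].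
  rewrite (partial_eq d f t x y l It Hl); exact Hl.
Qed.

Lemma differentiable_on_ext (d : dir) (f g : R -> R -> R -> R) :
  eq_on I f g -> differentiable_on I d f -> differentiable_on I d g.
Proof.
  intros Hfg Hf t x y It; destruct (Hf t x y It) as [l Hl]; exists l.
  exact (has_deriv_within_ext _ _ _ _ _ (dom_of_coord d t x y It)
           (section_eq_on d f g t x y Hfg It) Hl).
Qed.

Lemma differentiable_on_const (d : dir) (k : R) : differentiable_on I d (fun _ _ _ => k).
Proof. intros t x y _; exists 0; rewrite section_const; apply has_deriv_within_const. Qed.

Lemma differentiable_on_plus (d : dir) (f g : R -> R -> R -> R) :
  differentiable_on I d f -> differentiable_on I d g ->
  differentiable_on I d (fun t x y => f t x y + g t x y).
Proof.
  intros Hf Hg t x y It; rewrite (section_map2 Rplus).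
  eexists; apply has_deriv_within_plus; apply has_partial; auto.
Qed.

Lemma differentiable_on_mult (d : dir) (f g : R -> R -> R -> R) :
  differentiable_on I d f -> differentiable_on I d g ->
  differentiable_on I d (fun t x y => f t x y * g t x y).
Proof.
  intros Hf Hg t x y It; rewrite (section_map2 Rmult).
  eexists; apply has_deriv_within_mult; apply has_partial; auto.
Qed.

Lemma partial_ext (d : dir) (f g : R -> R -> R -> R) :
  eq_on I f g -> eq_on I (partial I d f) (partial I d g).
Proof.
  intros Hfg t x y It.
  assert (Hgf : eq_on I g f) by (intros t' x' y' It'; symmetry; auto).
  assert (Hiff : forall l,
    has_deriv_within (dom_of I d) (section d f t x y) (coord d t x y) l <->
    has_deriv_within (dom_of I d) (section d g t x y) (coord d t x y) l).
  { intros l; split; apply has_deriv_within_ext; auto using dom_of_coord, section_eq_on. }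
  destruct (classic (exists l,
    has_deriv_within (dom_of I d) (section d f t x y) (coord d t x y) l)) as [[l Hl] | Hnone].
  - rewrite (partial_eq d f t x y l It Hl); symmetry.
    apply partial_eq; [exact It | apply Hiff; exact Hl].
  - unfold partial, deriv_within.
    destruct (excluded_middle_informative _) as [Hf | _]; [contradiction |].
    destruct (excluded_middle_informative _) as [[l Hg] | _]; [| reflexivity].
    exfalso; apply Hnone; exists l; apply Hiff; exact Hg.
Qed.

Lemma partial_const (d : dir) (k : R) : eq_on I (partial I d (fun _ _ _ => k)) (fun _ _ _ => 0).
Proof.
  intros t x y It; apply partial_eq; [exact It |].
  rewrite section_const; apply has_deriv_within_const.
Qed.

Lemma partial_plus (d : dir) (f g : R -> R -> R -> R) :
  differentiable_on I d f -> differentiable_on I d g ->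
  eq_on I (partial I d (fun t x y => f t x y + g t x y))
          (fun t x y => partial I d f t x y + partial I d g t x y).
Proof.
  intros Hf Hg t x y It; apply partial_eq; [exact It |].
  rewrite (section_map2 Rplus); apply has_deriv_within_plus; apply has_partial; auto.
Qed.

Lemma partial_minus (d : dir) (f g : R -> R -> R -> R) :
  differentiable_on I d f -> differentiable_on I d g ->
  eq_on I (partial I d (fun t x y => f t x y - g t x y))
          (fun t x y => partial I d f t x y - partial I d g t x y).
Proof.
  intros Hf Hg t x y It; apply partial_eq; [exact It |].
  rewrite (section_map2 Rminus); apply has_deriv_within_minus; apply has_partial; auto.
Qed.

Lemma partial_mult (d : dir) (f g : R -> R -> R -> R) :
  differentiable_on I d f -> differentiable_on I d g ->
  eq_on I (partial I d (fun t x y => f t x y * g t x y))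
          (fun t x y => partial I d f t x y * g t x y + f t x y * partial I d g t x y).
Proof.
  intros Hf Hg t x y It; apply partial_eq; [exact It |].
  rewrite (section_map2 Rmult), <- (section_coord d f t x y), <- (section_coord d g t x y).
  apply has_deriv_within_mult; apply has_partial; auto.
Qed.

Lemma smooth_on_partial (d : dir) (f : R -> R -> R -> R) :
  smooth_on I f -> smooth_on I (partial I d f).
Proof.
  intros Hf w; specialize (Hf (w ++ d :: nil)).
  unfold iter_partial in *; rewrite fold_right_app in Hf; exact Hf.
Qed.

Lemma smooth_on_continuous (f : R -> R -> R -> R) :
  smooth_on I f -> continuous_on_dom I f.
Proof. intros Hf; exact (proj1 (Hf nil)). Qed.

Lemma smooth_on_differentiable (d : dir) (f : R -> R -> R -> R) :
  smooth_on I f -> differentiable_on I d f.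
Proof. intros Hf t x y It; exact (proj2 (Hf nil) d t x y It). Qed.

(* Stable under partial derivatives (Leibniz rule), this closure consists of smooth
   functions; hence smooth functions form an algebra. *)
Inductive smooth_closure : (R -> R -> R -> R) -> Prop :=
| smooth_closure_base f : smooth_on I f -> smooth_closure f
| smooth_closure_const k : smooth_closure (fun _ _ _ => k)
| smooth_closure_plus f g : smooth_closure f -> smooth_closure g ->
    smooth_closure (fun t x y => f t x y + g t x y)
| smooth_closure_mult f g : smooth_closure f -> smooth_closure g ->
    smooth_closure (fun t x y => f t x y * g t x y)
| smooth_closure_ext f g : smooth_closure f -> eq_on I f g -> smooth_closure g.

Lemma smooth_closure_partial (f : R -> R -> R -> R) : smooth_closure f ->
  continuous_on_dom I f /\ (forall d, differentiable_on I d f) /\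
  (forall d, smooth_closure (partial I d f)).
Proof.
  induction 1 as [f Hf | k | f g _ [Cf [Df Pf]] _ [Cg [Dg Pg]]
                  | f g Hf [Cf [Df Pf]] Hg [Cg [Dg Pg]] | f g _ [Cf [Df Pf]] Hfg].
  - split; [apply smooth_on_continuous; exact Hf |].
    split; intros d; [apply smooth_on_differentiable | apply smooth_closure_base,
                      smooth_on_partial]; exact Hf.
  - split; [apply continuous_on_dom_const |]; split; [intros; apply differentiable_on_const |].
    intros d; apply (smooth_closure_ext _ _ (smooth_closure_const 0)).
    intros t x y It; symmetry; apply partial_const; exact It.
  - split; [apply continuous_on_dom_plus; auto |].
    split; [intros; apply differentiable_on_plus; auto |].
    intros d; apply (smooth_closure_ext _ _ (smooth_closure_plus _ _ (Pf d) (Pg d))).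
    intros t x y It; symmetry; apply partial_plus; auto.
  - split; [apply continuous_on_dom_mult; auto |].
    split; [intros; apply differentiable_on_mult; auto |].
    intros d; eapply smooth_closure_ext;
      [apply smooth_closure_plus; apply smooth_closure_mult;
         [apply Pf | exact Hg | exact Hf | apply Pg] |].
    intros t x y It; symmetry; apply partial_mult; auto.
  - split; [apply (continuous_on_dom_ext _ f); auto |].
    split; [intros d; apply (differentiable_on_ext d f); auto |].
    intros d; apply (smooth_closure_ext _ _ (Pf d)), partial_ext; exact Hfg.
Qed.

Lemma smooth_closure_smooth (f : R -> R -> R -> R) : smooth_closure f -> smooth_on I f.
Proof.
  intros Hf w.
  assert (Hw : smooth_closure (iter_partial I w f)).
  { induction w as [| d w IH]; [exact Hf | apply (smooth_closure_partial _ IH)]. }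
  destruct (smooth_closure_partial _ Hw) as [Hcont [Hdiff _]].
  split; [exact Hcont | intros d; apply Hdiff].
Qed.

Lemma smooth_on_const (k : R) : smooth_on I (fun _ _ _ => k).
Proof. apply smooth_closure_smooth, smooth_closure_const. Qed.

Lemma smooth_on_plus (f g : R -> R -> R -> R) : smooth_on I f -> smooth_on I g ->
  smooth_on I (fun t x y => f t x y + g t x y).
Proof.
  intros; apply smooth_closure_smooth, smooth_closure_plus; apply smooth_closure_base; auto.
Qed.

Lemma smooth_on_mult (f g : R -> R -> R -> R) : smooth_on I f -> smooth_on I g ->
  smooth_on I (fun t x y => f t x y * g t x y).
Proof.
  intros; apply smooth_closure_smooth, smooth_closure_mult; apply smooth_closure_base; auto.
Qed.

Lemma smooth_on_ext (f g : R -> R -> R -> R) : eq_on I f g -> smooth_on I f -> smooth_on I g.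
Proof.
  intros Hfg Hf; apply smooth_closure_smooth.
  exact (smooth_closure_ext _ _ (smooth_closure_base _ Hf) Hfg).
Qed.

Lemma smooth_on_minus (f g : R -> R -> R -> R) : smooth_on I f -> smooth_on I g ->
  smooth_on I (fun t x y => f t x y - g t x y).
Proof.
  intros Hf Hg; apply (smooth_on_ext (fun t x y => f t x y + (-1) * g t x y)).
  - intros t x y _; ring.
  - apply smooth_on_plus, smooth_on_mult; auto using smooth_on_const.
Qed.

End Partials.

Lemma is_derive_Schwarz (F P1 P2 P12 P21 : R -> R -> R) (u0 v0 : R) :
  locally_2d (fun u v =>
    is_derive (fun z => F z v) u (P1 u v) /\ is_derive (fun z => F u z) v (P2 u v) /\
    is_derive (fun z => P2 z v) u (P21 u v) /\ is_derive (fun z => P1 u z) v (P12 u v)) u0 v0 ->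
  continuity_2d_pt P21 u0 v0 -> continuity_2d_pt P12 u0 v0 -> P21 u0 v0 = P12 u0 v0.
Proof.
  intros [r Hr] C21 C12.
  assert (Hh : 0 < r / 2) by (pose proof (cond_pos r); lra).
  set (h := mkposreal _ Hh).
  assert (Hnear : forall a a0 z, Rabs (a - a0) < h -> Rabs (z - a) < h -> Rabs (z - a0) < r).
  { simpl; intros a a0 z Ha Hz.
    pose proof (Rabs_triang (z - a) (a - a0)).
    replace (z - a + (a - a0)) with (z - a0) in * by ring.
    lra. }
  assert (Hin : forall a a0, Rabs (a - a0) < h -> Rabs (a - a0) < r) by (simpl; intros; lra).
  assert (D21 : forall u v, Rabs (u - u0) < h -> Rabs (v - v0) < h ->
    is_derive (fun z => Derive (fun s => F z s) v) u (P21 u v)).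
  { intros u v Hu Hv; apply (is_derive_ext_loc (fun z => P2 z v)); [| apply Hr; auto].
    exists h; intros z Hz; symmetry; apply is_derive_unique, (Hr z v); eauto. }
  assert (D12 : forall u v, Rabs (u - u0) < h -> Rabs (v - v0) < h ->
    is_derive (fun z => Derive (fun s => F s z) u) v (P12 u v)).
  { intros u v Hu Hv; apply (is_derive_ext_loc (fun z => P1 u z)); [| apply Hr; auto].
    exists h; intros z Hz; symmetry; apply is_derive_unique, (Hr u z); eauto. }
  assert (H0 : Rabs (u0 - u0) < h /\ Rabs (v0 - v0) < h)
    by (rewrite !Rminus_diag, Rabs_R0; split; apply cond_pos).
  rewrite <- (is_derive_unique _ _ _ (D21 u0 v0 (proj1 H0) (proj2 H0))),
          <- (is_derive_unique _ _ _ (D12 u0 v0 (proj1 H0) (proj2 H0))).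
  apply Schwarz.
  - exists h; intros u v Hu Hv.
    destruct (Hr u v (Hin _ _ Hu) (Hin _ _ Hv)) as [HF1 [HF2 _]].
    repeat split; eexists; [exact HF1 | exact HF2 | apply D21 | apply D12]; auto.
  - apply (continuity_2d_pt_ext_loc P21); [| exact C21].
    exists h; intros u v Hu Hv; symmetry; apply is_derive_unique, D21; auto.
  - apply (continuity_2d_pt_ext_loc P12); [| exact C12].
    exists h; intros u v Hu Hv; symmetry; apply is_derive_unique, D12; auto.
Qed.

Section MixedPartials.

Variable I : R -> Prop.
Hypothesis HI : is_interval I.
Variable f : R -> R -> R -> R.
Hypothesis Hf : smooth_on I f.

Lemma dom_of_interior (d : dir) (t x y : R) :
  interior I t -> interior (dom_of I d) (coord d t x y).
Proof.
  destruct d; simpl; intros Ht; [exact Ht | |]; exists posreal_one; intros z _; exact Logic.I.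
Qed.

Lemma has_partial_is_derive (d : dir) (g : R -> R -> R -> R) (t x y : R) :
  smooth_on I g -> interior I t ->
  is_derive (section d g t x y) (coord d t x y) (partial I d g t x y).
Proof.
  intros Hg Ht; apply (is_derive_of_interior (dom_of I d)); [apply dom_of_interior; exact Ht |].
  apply has_partial;
    [exact HI | apply smooth_on_differentiable; exact Hg | apply interior_P1; exact Ht].
Qed.

Lemma continuous_on_dom_interior (g : R -> R -> R -> R) (t0 x0 y0 : R) :
  continuous_on_dom I g -> interior I t0 ->
  forall eps : posreal, exists delta : posreal, forall t x y,
    Rabs (t - t0) < delta -> Rabs (x - x0) < delta -> Rabs (y - y0) < delta ->
    Rabs (g t x y - g t0 x0 y0) < eps.
Proof.
  intros Hg [r Hr] eps.
  destruct (Hg t0 x0 y0 (Hr t0 ltac:(unfold disc; rewrite Rminus_diag, Rabs_R0; apply cond_pos))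
              eps (cond_pos eps)) as [delta [Hdelta Hclose]].
  exists (mkposreal _ (Rmin_pos _ _ Hdelta (cond_pos r))); simpl; intros t x y Ht Hx Hy.
  pose proof (Rmin_l delta r); pose proof (Rmin_r delta r).
  apply Hclose; try lra; apply Hr; unfold disc; lra.
Qed.

Lemma continuity_2d_pt_Dt_D1 (g : R -> R -> R -> R) (t0 x0 y0 : R) :
  smooth_on I g -> interior I t0 -> continuity_2d_pt (fun u v => g u v y0) t0 x0.
Proof.
  intros Hg Ht eps; destruct (continuous_on_dom_interior g t0 x0 y0
    (smooth_on_continuous _ _ Hg) Ht eps) as [delta Hdelta].
  exists delta; intros u v Hu Hv; apply Hdelta; auto.
  rewrite Rminus_diag, Rabs_R0; apply cond_pos.
Qed.

Lemma continuity_2d_pt_Dt_D2 (g : R -> R -> R -> R) (t0 x0 y0 : R) :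
  smooth_on I g -> interior I t0 -> continuity_2d_pt (fun u v => g u x0 v) t0 y0.
Proof.
  intros Hg Ht eps; destruct (continuous_on_dom_interior g t0 x0 y0
    (smooth_on_continuous _ _ Hg) Ht eps) as [delta Hdelta].
  exists delta; intros u v Hu Hv; apply Hdelta; auto.
  rewrite Rminus_diag, Rabs_R0; apply cond_pos.
Qed.

Lemma continuity_2d_pt_D1_D2 (g : R -> R -> R -> R) (t0 x0 y0 : R) :
  smooth_on I g -> interior I t0 -> continuity_2d_pt (fun u v => g t0 u v) x0 y0.
Proof.
  intros Hg Ht eps; destruct (continuous_on_dom_interior g t0 x0 y0
    (smooth_on_continuous _ _ Hg) Ht eps) as [delta Hdelta].
  exists delta; intros u v Hu Hv; apply Hdelta; auto.
  rewrite Rminus_diag, Rabs_R0; apply cond_pos.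
Qed.

Let Hf_partial2 (a b : dir) : smooth_on I (partial I a (partial I b f)) :=
  smooth_on_partial _ _ _ (smooth_on_partial _ _ _ Hf).

Lemma partial_comm_Dt_D1_interior (t0 x0 y0 : R) : interior I t0 ->
  partial I Dt (partial I D1 f) t0 x0 y0 = partial I D1 (partial I Dt f) t0 x0 y0.
Proof.
  intros Ht; destruct (interior_P3 I t0 Ht) as [r Hr].
  apply (is_derive_Schwarz (fun u v => f u v y0) (fun u v => partial I Dt f u v y0)
           (fun u v => partial I D1 f u v y0) (fun u v => partial I D1 (partial I Dt f) u v y0)
           (fun u v => partial I Dt (partial I D1 f) u v y0));
    [| apply continuity_2d_pt_Dt_D1, Ht; apply Hf_partial2 ..].
  exists r; intros u v Hu _; assert (Hu' : interior I u) by (apply Hr; exact Hu).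
  refine (conj _ (conj _ (conj _ _)));
    [ apply (has_partial_is_derive Dt f u v y0) | apply (has_partial_is_derive D1 f u v y0)
    | apply (has_partial_is_derive Dt (partial I D1 f) u v y0)
    | apply (has_partial_is_derive D1 (partial I Dt f) u v y0) ];
    auto using smooth_on_partial.
Qed.

Lemma partial_comm_Dt_D2_interior (t0 x0 y0 : R) : interior I t0 ->
  partial I Dt (partial I D2 f) t0 x0 y0 = partial I D2 (partial I Dt f) t0 x0 y0.
Proof.
  intros Ht; destruct (interior_P3 I t0 Ht) as [r Hr].
  apply (is_derive_Schwarz (fun u v => f u x0 v) (fun u v => partial I Dt f u x0 v)
           (fun u v => partial I D2 f u x0 v) (fun u v => partial I D2 (partial I Dt f) u x0 v)
           (fun u v => partial I Dt (partial I D2 f) u x0 v));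
    [| apply continuity_2d_pt_Dt_D2, Ht; apply Hf_partial2 ..].
  exists r; intros u v Hu _; assert (Hu' : interior I u) by (apply Hr; exact Hu).
  refine (conj _ (conj _ (conj _ _)));
    [ apply (has_partial_is_derive Dt f u x0 v) | apply (has_partial_is_derive D2 f u x0 v)
    | apply (has_partial_is_derive Dt (partial I D2 f) u x0 v)
    | apply (has_partial_is_derive D2 (partial I Dt f) u x0 v) ];
    auto using smooth_on_partial.
Qed.

Lemma partial_comm_D1_D2_interior (t0 x0 y0 : R) : interior I t0 ->
  partial I D1 (partial I D2 f) t0 x0 y0 = partial I D2 (partial I D1 f) t0 x0 y0.
Proof.
  intros Ht.
  apply (is_derive_Schwarz (fun u v => f t0 u v) (fun u v => partial I D1 f t0 u v)
           (fun u v => partial I D2 f t0 u v) (fun u v => partial I D2 (partial I D1 f) t0 u v)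
           (fun u v => partial I D1 (partial I D2 f) t0 u v));
    [| apply continuity_2d_pt_D1_D2, Ht; apply Hf_partial2 ..].
  exists posreal_one; intros u v _ _.
  refine (conj _ (conj _ (conj _ _)));
    [ apply (has_partial_is_derive D1 f t0 u v) | apply (has_partial_is_derive D2 f t0 u v)
    | apply (has_partial_is_derive D1 (partial I D2 f) t0 u v)
    | apply (has_partial_is_derive D2 (partial I D1 f) t0 u v) ];
    auto using smooth_on_partial.
Qed.

Lemma eq_on_of_interior (g1 g2 : R -> R -> R -> R) :
  continuous_on_dom I g1 -> continuous_on_dom I g2 ->
  (forall t x y, interior I t -> g1 t x y = g2 t x y) -> eq_on I g1 g2.
Proof.
  intros Hg1 Hg2 Hint t0 x0 y0 It0.
  destruct (Req_dec (g1 t0 x0 y0) (g2 t0 x0 y0)) as [Heq | Hneq]; [exact Heq | exfalso].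
  set (eps := Rabs (g1 t0 x0 y0 - g2 t0 x0 y0)).
  assert (Heps : 0 < eps) by (apply Rabs_pos_lt, Rminus_eq_contra, Hneq).
  destruct (Hg1 t0 x0 y0 It0 (eps / 2)) as [d1 [Hd1 Hclose1]]; [lra |].
  destruct (Hg2 t0 x0 y0 It0 (eps / 2)) as [d2 [Hd2 Hclose2]]; [lra |].
  destruct (interval_interior_approx I t0 (Rmin d1 d2) HI It0 (Rmin_pos _ _ Hd1 Hd2))
    as [s [Hs [_ Hst]]].
  pose proof (Rmin_l d1 d2); pose proof (Rmin_r d1 d2).
  assert (Hxy : Rabs (x0 - x0) < Rmin d1 d2 /\ Rabs (y0 - y0) < Rmin d1 d2)
    by (rewrite !Rminus_diag, Rabs_R0; split; apply Rmin_pos; auto).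
  specialize (Hclose1 s x0 y0 (interior_P1 I s Hs) ltac:(lra) ltac:(lra) ltac:(lra)).
  specialize (Hclose2 s x0 y0 (interior_P1 I s Hs) ltac:(lra) ltac:(lra) ltac:(lra)).
  rewrite (Hint s x0 y0 Hs) in Hclose1.
  assert (Htri : eps <= Rabs (g1 t0 x0 y0 - g2 s x0 y0) + Rabs (g2 s x0 y0 - g2 t0 x0 y0)).
  { unfold eps; replace (g1 t0 x0 y0 - g2 t0 x0 y0)
      with ((g1 t0 x0 y0 - g2 s x0 y0) + (g2 s x0 y0 - g2 t0 x0 y0)) by ring.
    apply Rabs_triang. }
  rewrite Rabs_minus_sym in Hclose1; lra.
Qed.

Lemma partial_comm (a b : dir) :
  eq_on I (partial I a (partial I b f)) (partial I b (partial I a f)).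
Proof.
  apply eq_on_of_interior; [apply smooth_on_continuous, Hf_partial2 .. |].
  intros t x y Ht; destruct a, b; try reflexivity;
    [ | | symmetry | | symmetry | symmetry ];
    auto using partial_comm_Dt_D1_interior, partial_comm_Dt_D2_interior,
               partial_comm_D1_D2_interior.
Qed.

End MixedPartials.

Open Scope C_scope.

Section ComplexPartials.

Variable I : R -> Prop.
Hypothesis HI : is_interval I.

Lemma smoothC_on_const (c : C) : smoothC_on I (fun _ _ _ => c).
Proof. split; apply smooth_on_const, HI. Qed.

Lemma smoothC_on_RtoC (f : R -> R -> R -> R) :
  smooth_on I f -> smoothC_on I (fun t x y => RtoC (f t x y)).
Proof. intros Hf; split; [exact Hf | exact (smooth_on_const I HI 0)]. Qed.

Lemma smoothC_on_plus (p q : R -> R -> R -> C) : smoothC_on I p -> smoothC_on I q ->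
  smoothC_on I (fun t x y => p t x y + q t x y).
Proof. intros [Hp1 Hp2] [Hq1 Hq2]; split; apply (smooth_on_plus I HI); auto. Qed.

Lemma smoothC_on_mult (p q : R -> R -> R -> C) : smoothC_on I p -> smoothC_on I q ->
  smoothC_on I (fun t x y => p t x y * q t x y).
Proof.
  intros [Hp1 Hp2] [Hq1 Hq2]; split.
  - apply (smooth_on_minus I HI); apply (smooth_on_mult I HI); auto.
  - apply (smooth_on_plus I HI); apply (smooth_on_mult I HI); auto.
Qed.

Lemma smoothC_on_ext (p q : R -> R -> R -> C) : eq_on I p q -> smoothC_on I p -> smoothC_on I q.
Proof.
  intros Hpq [Hp1 Hp2]; split;
    [refine (smooth_on_ext I HI _ _ _ Hp1) | refine (smooth_on_ext I HI _ _ _ Hp2)];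
    intros t x y It; rewrite Hpq; auto.
Qed.

Lemma smoothC_on_cpartial (d : dir) (p : R -> R -> R -> C) :
  smoothC_on I p -> smoothC_on I (cpartial I d p).
Proof. intros [Hp1 Hp2]; split; apply smooth_on_partial; auto. Qed.

Lemma cpartial_ext (d : dir) (p q : R -> R -> R -> C) :
  eq_on I p q -> eq_on I (cpartial I d p) (cpartial I d q).
Proof.
  intros Hpq t x y It; unfold cpartial; f_equal; apply partial_ext; auto;
    intros t' x' y' It'; rewrite Hpq; auto.
Qed.

Lemma cpartial_const (d : dir) (c : C) :
  eq_on I (cpartial I d (fun _ _ _ => c)) (fun _ _ _ => RtoC 0).
Proof. intros t x y It; unfold cpartial; rewrite !partial_const; auto. Qed.

Lemma cpartial_RtoC (d : dir) (f : R -> R -> R -> R) :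
  eq_on I (cpartial I d (fun t x y => RtoC (f t x y))) (fun t x y => RtoC (partial I d f t x y)).
Proof. intros t x y It; unfold cpartial; simpl; rewrite partial_const; auto. Qed.

Lemma cpartial_plus (d : dir) (p q : R -> R -> R -> C) : smoothC_on I p -> smoothC_on I q ->
  eq_on I (cpartial I d (fun t x y => p t x y + q t x y))
          (fun t x y => cpartial I d p t x y + cpartial I d q t x y).
Proof.
  intros [Hp1 Hp2] [Hq1 Hq2] t x y It; unfold cpartial.
  simpl; rewrite !partial_plus; auto using smooth_on_differentiable.
Qed.

Lemma cpartial_mult (d : dir) (p q : R -> R -> R -> C) : smoothC_on I p -> smoothC_on I q ->
  eq_on I (cpartial I d (fun t x y => p t x y * q t x y))
          (fun t x y => cpartial I d p t x y * q t x y + p t x y * cpartial I d q t x y).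
Proof.
  intros [Hp1 Hp2] [Hq1 Hq2] t x y It; unfold cpartial.
  simpl; rewrite partial_minus, partial_plus, !partial_mult;
    auto using smooth_on_differentiable, differentiable_on_mult.
  apply injective_projections; simpl; ring.
Qed.

Lemma cpartial_comm (a b : dir) (p : R -> R -> R -> C) : smoothC_on I p ->
  eq_on I (cpartial I a (cpartial I b p)) (cpartial I b (cpartial I a p)).
Proof.
  intros [Hp1 Hp2] t x y It; unfold cpartial at 1 3; simpl.
  rewrite (partial_comm I HI _ Hp1 a b), (partial_comm I HI _ Hp2 a b); auto.
Qed.

End ComplexPartials.

Lemma Ci_sqr : Ci * Ci = -1.
Proof. apply injective_projections; simpl; ring. Qed.

Section Connection.

Variable I : R -> Prop.
Hypothesis HI : is_interval I.
Variables At A1 A2 : R -> R -> R -> R.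
Hypotheses (HAt : smooth_on I At) (HA1 : smooth_on I A1) (HA2 : smooth_on I A2).

Local Notation cD := (covD I At A1 A2).
Local Notation Dz := (covDz I At A1 A2).
Local Notation Dzb := (covDzb I At A1 A2).
Local Notation A := (Acomp At A1 A2).
Local Notation F := (curv I At A1 A2).

Lemma smooth_on_Acomp (d : dir) : smooth_on I (A d).
Proof. destruct d; assumption. Qed.

Lemma smoothC_on_covD (d : dir) (p : R -> R -> R -> C) : smoothC_on I p -> smoothC_on I (cD d p).
Proof.
  intros Hp; apply smoothC_on_plus; [exact HI | apply smoothC_on_cpartial; exact Hp |].
  apply smoothC_on_mult; auto; apply smoothC_on_mult; auto.
  - apply smoothC_on_const; exact HI.
  - apply smoothC_on_RtoC, smooth_on_Acomp; exact HI.
Qed.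

Lemma covD_ext (d : dir) (p q : R -> R -> R -> C) :
  eq_on I p q -> eq_on I (cD d p) (cD d q).
Proof.
  intros Hpq t x y It; unfold covD; rewrite (cpartial_ext I HI d p q Hpq t x y It), Hpq; auto.
Qed.

Lemma covD_lin (d : dir) (c1 c2 : C) (p q : R -> R -> R -> C) :
  smoothC_on I p -> smoothC_on I q ->
  eq_on I (cD d (fun t x y => c1 * p t x y + c2 * q t x y))
          (fun t x y => c1 * cD d p t x y + c2 * cD d q t x y).
Proof.
  intros Hp Hq t x y It; unfold covD.
  rewrite (cpartial_plus I HI d); auto using smoothC_on_mult, smoothC_on_const.
  rewrite !(cpartial_mult I HI d (fun _ _ _ => _)); auto using smoothC_on_const.
  rewrite !(cpartial_const I HI d); auto; ring.
Qed.

Lemma covD_vanish (d : dir) (p : R -> R -> R -> C) :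
  eq_on I p (fun _ _ _ => RtoC 0) -> eq_on I (cD d p) (fun _ _ _ => RtoC 0).
Proof.
  intros Hp t x y It; rewrite (covD_ext d p _ Hp t x y It); unfold covD.
  rewrite (cpartial_const I HI d); auto; ring.
Qed.

Lemma covD_covD (a b : dir) (p : R -> R -> R -> C) : smoothC_on I p ->
  eq_on I (cD a (cD b p))
    (fun t x y => cpartial I a (cpartial I b p) t x y
                  + Ci * RtoC (partial I a (A b) t x y) * p t x y
                  + Ci * RtoC (A b t x y) * cpartial I a p t x y
                  + Ci * RtoC (A a t x y) * cD b p t x y).
Proof.
  intros Hp t x y It.
  assert (HAb : smoothC_on I (fun t x y => RtoC (A b t x y)))
    by (apply smoothC_on_RtoC, smooth_on_Acomp; exact HI).
  unfold covD at 1 2.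
  rewrite (cpartial_plus I HI a); auto using smoothC_on_cpartial, smoothC_on_mult, smoothC_on_const.
  rewrite (cpartial_mult I HI a (fun t x y => Ci * RtoC (A b t x y)));
    auto using smoothC_on_mult, smoothC_on_const.
  rewrite (cpartial_mult I HI a (fun _ _ _ => Ci)); auto using smoothC_on_const.
  rewrite (cpartial_const I HI a), (cpartial_RtoC I HI a); auto.
  unfold covD; ring.
Qed.

Lemma covD_comm (a b : dir) (p : R -> R -> R -> C) : smoothC_on I p ->
  eq_on I (cD a (cD b p)) (fun t x y => cD b (cD a p) t x y + Ci * RtoC (F a b t x y) * p t x y).
Proof.
  intros Hp t x y It.
  rewrite (covD_covD a b p Hp t x y It), (covD_covD b a p Hp t x y It).
  rewrite (cpartial_comm I HI a b p Hp t x y It).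
  unfold covD, curv; rewrite RtoC_minus; ring.
Qed.

Lemma covDz_lin_form (p : R -> R -> R -> C) :
  eq_on I (Dz p) (fun t x y => / RtoC 2 * cD D1 p t x y + / (RtoC 2 * Ci) * cD D2 p t x y).
Proof. intros t x y _; reflexivity. Qed.

Lemma covDzb_lin_form (p : R -> R -> R -> C) :
  eq_on I (Dzb p) (fun t x y => / RtoC 2 * cD D1 p t x y + - / (RtoC 2 * Ci) * cD D2 p t x y).
Proof. intros t x y _; unfold covDzb; ring. Qed.

Lemma smoothC_on_covDz (p : R -> R -> R -> C) : smoothC_on I p -> smoothC_on I (Dz p).
Proof.
  intros Hp; apply smoothC_on_plus; auto;
    apply smoothC_on_mult; auto using smoothC_on_const, smoothC_on_covD.
Qed.

Lemma smoothC_on_covDzb (p : R -> R -> R -> C) : smoothC_on I p -> smoothC_on I (Dzb p).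
Proof.
  intros Hp; apply (smoothC_on_ext I HI _ _ (fun t x y It => eq_sym (covDzb_lin_form p t x y It))).
  apply smoothC_on_plus; auto;
    apply smoothC_on_mult; auto using smoothC_on_const, smoothC_on_covD.
Qed.

Lemma covDzb_lin (c1 c2 : C) (p q : R -> R -> R -> C) :
  smoothC_on I p -> smoothC_on I q ->
  eq_on I (Dzb (fun t x y => c1 * p t x y + c2 * q t x y))
          (fun t x y => c1 * Dzb p t x y + c2 * Dzb q t x y).
Proof. intros Hp Hq t x y It; unfold covDzb; rewrite !covD_lin; auto; ring. Qed.

Lemma covDzb_vanish (p : R -> R -> R -> C) :
  eq_on I p (fun _ _ _ => RtoC 0) -> eq_on I (Dzb p) (fun _ _ _ => RtoC 0).
Proof. intros Hp t x y It; unfold covDzb; rewrite !covD_vanish; auto; ring. Qed.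

Lemma covDzb_covD_Dt (p : R -> R -> R -> C) : smoothC_on I p ->
  eq_on I (Dzb (cD Dt p))
          (fun t x y => cD Dt (Dzb p) t x y - Ci * F_tzb I At A1 A2 t x y * p t x y).
Proof.
  intros Hp t x y It.
  rewrite (covD_ext Dt _ _ (covDzb_lin_form p) t x y It), covD_lin; auto using smoothC_on_covD.
  unfold covDzb; rewrite !(covD_comm Dt); auto.
  unfold F_tzb; ring.
Qed.

Lemma covDzb_covDz (p : R -> R -> R -> C) : smoothC_on I p ->
  eq_on I (Dzb (Dz p))
          (fun t x y => Dz (Dzb p) t x y - Ci * F_zzb I At A1 A2 t x y * p t x y).
Proof.
  intros Hp t x y It.
  unfold covDzb at 1; rewrite !(covD_ext _ _ _ (covDz_lin_form p) t x y It), !covD_lin;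
    auto using smoothC_on_covD.
  unfold covDz; rewrite !(covD_ext _ _ _ (covDzb_lin_form p) t x y It), !covD_lin;
    auto using smoothC_on_covD.
  rewrite (covD_comm D1 D2); auto.
  unfold F_zzb; field; exact Ci_nz.
Qed.

Lemma covDzb_schrodinger (p q : R -> R -> R -> C) : smoothC_on I p -> smoothC_on I q ->
  eq_on I (fun t x y => Ci * cD Dt p t x y + RtoC 4 * Dz q t x y) (fun _ _ _ => RtoC 0) ->
  eq_on I (fun t x y => Ci * cD Dt (Dzb p) t x y + F_tzb I At A1 A2 t x y * p t x y
                        + RtoC 4 * Dzb (Dz q) t x y)
          (fun _ _ _ => RtoC 0).
Proof.
  intros Hp Hq Hschr t x y It.
  rewrite <- (covDzb_vanish _ Hschr t x y It).
  rewrite (covDzb_lin Ci (RtoC 4)); auto using smoothC_on_covD, smoothC_on_covDz.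
  rewrite (covDzb_covD_Dt p Hp t x y It).
  ring [Ci_sqr].
Qed.

Section Solution.

Variable phi : R -> R -> R -> C.
Hypothesis Hphi : smoothC_on I phi.
Hypothesis HFtzb : forall t x y, I t ->
  F_tzb I At A1 A2 t x y = Cconj (phi t x y) * Dzb phi t x y.
Hypothesis HFzzb : forall t x y, I t ->
  F_zzb I At A1 A2 t x y = / (RtoC 4 * Ci) * RtoC (Cmod (phi t x y) ^ 2)%R.
Hypothesis Hschr : forall t x y, I t ->
  Ci * cD Dt phi t x y + RtoC 4 * Dz (Dzb phi) t x y = RtoC 0.

Lemma schrodinger_covDzb_phi : forall t x y, I t ->
  Ci * cD Dt (Dzb phi) t x y + RtoC 4 * Dz (Dzb (Dzb phi)) t x y = RtoC 0.
Proof.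
  intros t x y It.
  assert (Hpsi : smoothC_on I (Dzb phi)) by (apply smoothC_on_covDzb; exact Hphi).
  rewrite <- (covDzb_schrodinger phi (Dzb phi) Hphi Hpsi Hschr t x y It).
  rewrite (covDzb_covDz _ Hpsi t x y It), HFtzb, HFzzb, Cmod2_conj by exact It.
  field; exact Ci_nz.
Qed.

Lemma schrodinger_covDzb_covDzb_phi : forall t x y, I t ->
  Ci * cD Dt (Dzb (Dzb phi)) t x y + RtoC 4 * Dzb (Dz (Dzb (Dzb phi))) t x y
  + Cconj (phi t x y) * (Dzb phi t x y * Dzb phi t x y) = RtoC 0.
Proof.
  intros t x y It.
  assert (Hpsi : smoothC_on I (Dzb phi)) by (apply smoothC_on_covDzb; exact Hphi).
  rewrite <- (covDzb_schrodinger (Dzb phi) (Dzb (Dzb phi)) Hpsi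
                (smoothC_on_covDzb _ Hpsi) schrodinger_covDzb_phi t x y It).
  rewrite HFtzb by exact It; ring.
Qed.

End Solution.

End Connection.

Theorem proposition2p1
  (I : R -> Prop) (phi : R -> R -> R -> C) (At A1 A2 : R -> R -> R -> R)
  (HI : is_interval I)
  (Hphi : smoothC_on I phi)
  (HAt : smooth_on I At) (HA1 : smooth_on I A1) (HA2 : smooth_on I A2)
  (H1 : forall t x y, I t ->
     F_tzb I At A1 A2 t x y = Cconj (phi t x y) * covDzb I At A1 A2 phi t x y)
  (H2 : forall t x y, I t ->
     F_zzb I At A1 A2 t x y = / (RtoC 4 * Ci) * RtoC (Cmod (phi t x y) ^ 2)%R)
  (H3 : forall t x y, I t ->
     Ci * covD I At A1 A2 Dt phi t x y
     + RtoC 4 * covDz I At A1 A2 (covDzb I At A1 A2 phi) t x y = RtoC 0) :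
  (forall t x y, I t ->
     Ci * covD I At A1 A2 Dt (covDzb I At A1 A2 phi) t x y
     + RtoC 4 * covDz I At A1 A2 (covDzb I At A1 A2 (covDzb I At A1 A2 phi)) t x y
     = RtoC 0) /\
  (forall t x y, I t ->
     Ci * covD I At A1 A2 Dt (covDzb I At A1 A2 (covDzb I At A1 A2 phi)) t x y
     + RtoC 4 * covDzb I At A1 A2
         (covDz I At A1 A2 (covDzb I At A1 A2 (covDzb I At A1 A2 phi))) t x y
     + Cconj (phi t x y) * (covDzb I At A1 A2 phi t x y * covDzb I At A1 A2 phi t x y)
     = RtoC 0).
Proof.
  split.
  - exact (schrodinger_covDzb_phi I HI At A1 A2 HAt HA1 HA2 phi Hphi H1 H2 H3).
  - exact (schrodinger_covDzb_covDzb_phi I HI At A1 A2 HAt HA1 HA2 phi Hphi H1 H2 H3).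
Qed.
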